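(* Let $\|\cdot\|$ be a URTC-norm on $\mathbb{R}^2$, and let $\phi\colon\mathbb{R}^2\to\mathbb{R}^2$ be an arbitrary map such that for all $x,y\in\mathbb{R}^2$, $\|x-y\|=1$ implies $\|\phi(x)-\phi(y)\|=1$. Then $\phi$ is an affine isometry (with respect to $\|\cdot\|$).
   Context: A norm $\|\cdot\|$ on $\mathbb{R}^2$ is called a URTC-norm (unique regular triangle constructibility) if for every $a,b\in\mathbb{R}^2$ with $\|a-b\|=1$ the system $\|a-x\|=1$, $\|b-x\|=1$ is satisfied by exactly two points $x\in\mathbb{R}^2$. *)

From Stdlib Require Import Reals.
Open Scope R_scope.

Definition pt := (R * R)%type.

Definition vsub (x y : pt) : pt := (fst x - fst y, snd x - snd y).
Definition vadd (x y : pt) : pt := (fst x + fst y, snd x + snd y).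
Definition vscale (c : R) (x : pt) : pt := (c * fst x, c * snd x).

Definition is_norm (N : pt -> R) : Prop :=
  (forall v, 0 <= N v) /\
  (forall v, N v = 0 -> v = (0, 0)) /\
  (forall c v, N (vscale c v) = Rabs c * N v) /\
  (forall u v, N (vadd u v) <= N u + N v).

Definition URTC (N : pt -> R) : Prop :=
  forall a b : pt, N (vsub a b) = 1 ->
    exists x1 x2 : pt, x1 <> x2 /\
      forall x, (N (vsub a x) = 1 /\ N (vsub b x) = 1) <-> (x = x1 \/ x = x2).

Definition lin_app (m11 m12 m21 m22 : R) (v : pt) : pt :=
  (m11 * fst v + m12 * snd v, m21 * fst v + m22 * snd v).

Definition affine_isometry (N : pt -> R) (f : pt -> pt) : Prop :=
  (exists m11 m12 m21 m22 : R, exists t : pt,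
      forall x, f x = vadd (lin_app m11 m12 m21 m22 x) t) /\
  (forall x y, N (vsub (f x) (f y)) = N (vsub x y)).

(* Call unit vectors [u, v] with [N (u - v) = 1] a unit triangle. By URTC the only apexes over
   the unit segment [0, u] are [v] and [u - v]; hence [u + v] is never a unit vector, and [phi]
   maps the rhombus [x, x + u, x + v, x + u + v] either to a rhombus or onto a unit triangle with
   [x + u + v] collapsed onto [x]. Rotating the rhombus continuously along the unit sphere yields
   one whose long diagonal is at distance 1 from [u + v], and this excludes the collapse. So [phi]
   satisfies the parallelogram rule, and the increment [phi (q + w) - phi q] along a unit vector
   [w] is invariant under translation by [w]. As [phi] maps pairs at distance at most [2 k] to
   pairs at distance at most [2 k], the increment cannot drift along lines, so it does not depend
   on [q]. Therefore [phi - phi 0] is additive and locally bounded, hence linear, and it maps unit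
   vectors to unit vectors. *)

From Stdlib Require Import Reals Lra Psatz ZArith.
Open Scope R_scope.

Ltac vec_ring := apply injective_projections; unfold vsub, vadd, vscale, lin_app; simpl; ring.
Ltac vec_field := apply injective_projections; unfold vsub, vadd, vscale, lin_app; simpl; field.
Ltac vec_components E :=
  let E1 := fresh E in let E2 := fresh E in
  pose proof (f_equal fst E) as E1; pose proof (f_equal snd E) as E2; simpl in E1, E2; clear E.
Ltac vec_lra :=
  unfold vsub, vadd, vscale in *;
  repeat match goal with
  | E : @eq pt _ _ |- _ => vec_components E
  | E : @eq (prod R R) _ _ |- _ => vec_components E
  end;
  try apply injective_projections; simpl; lra.
Ltac norm_as N v := erewrite (@f_equal _ _ N _ v); [| vec_ring].

Lemma nat_above r : exists k : nat, r <= INR k.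
Proof.
  destruct (archimed r) as [Hup _].
  destruct (Z.lt_ge_cases 0 (up r)) as [Hpos | Hneg].
  - exists (Z.to_nat (up r)). rewrite INR_IZR_INZ, Z2Nat.id by lia. lra.
  - exists 0%nat. apply IZR_le in Hneg. simpl. lra.
Qed.

Lemma nonpos_of_bounded_multiples x B : (forall n : nat, INR n * x <= B) -> x <= 0.
Proof.
  intros Hbd. destruct (Rle_lt_dec x 0) as [Hx | Hx]; [exact Hx |].
  destruct (nat_above ((B + 1) / x)) as [n Hn].
  specialize (Hbd n).
  assert (B + 1 <= INR n * x) by
    (apply (Rmult_le_compat_r x) in Hn; [field_simplify in Hn; lra | lra]).
  lra.
Qed.

Lemma IZR_nat_cases (m : Z) : exists n : nat, IZR m = INR n \/ IZR m = - INR n.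
Proof.
  exists (Z.abs_nat m). rewrite INR_IZR_INZ, Zabs2Nat.id_abs.
  destruct (Z.le_gt_cases 0 m).
  - left. rewrite Z.abs_eq; auto.
  - right. rewrite Z.abs_neq, opp_IZR by lia. ring.
Qed.

Lemma continuity_pt_eps f t : continuity_pt f t <->
  forall eps, eps > 0 -> exists d, d > 0 /\ forall s, Rabs (s - t) < d -> Rabs (f s - f t) < eps.
Proof.
  unfold continuity_pt, continue_in, limit1_in, limit_in, D_x, no_cond; simpl; unfold Rdist.
  split; intros Hc eps Heps; destruct (Hc eps Heps) as [d [Hd Hs]]; exists d; split; auto.
  - intros s Hst. destruct (Req_dec s t) as [-> | Hne].
    + unfold Rminus. rewrite Rplus_opp_r, Rabs_R0. lra.
    + apply Hs; auto.
  - intros s [_ Hst]. auto.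
Qed.

Definition curve_continuous (F : R -> pt) := forall t,
  continuity_pt (fun s => fst (F s)) t /\ continuity_pt (fun s => snd (F s)) t.

Lemma curve_continuous_const p : curve_continuous (fun _ => p).
Proof. intros t; split; apply continuity_pt_const; intros ? ?; reflexivity. Qed.

Lemma curve_continuous_add F G :
  curve_continuous F -> curve_continuous G -> curve_continuous (fun s => vadd (F s) (G s)).
Proof. intros CF CG t. destruct (CF t), (CG t). split; apply continuity_pt_plus; auto. Qed.

Lemma curve_continuous_sub F G :
  curve_continuous F -> curve_continuous G -> curve_continuous (fun s => vsub (F s) (G s)).
Proof. intros CF CG t. destruct (CF t), (CG t). split; apply continuity_pt_minus; auto. Qed.

Lemma curve_continuous_scale c F :
  curve_continuous F -> curve_continuous (fun s => vscale c (F s)).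
Proof. intros CF t. destruct (CF t). split; apply continuity_pt_scal; auto. Qed.

Lemma curve_continuous_comp F h :
  curve_continuous F -> continuity h -> curve_continuous (fun s => F (h s)).
Proof.
  intros CF Ch t. destruct (CF (h t)).
  split; apply (continuity_pt_comp h (fun s => _ (F s))); auto.
Qed.

Definition rot (u : pt) (t : R) : pt :=
  (cos t * fst u - sin t * snd u, sin t * fst u + cos t * snd u).

Lemma rot0 u : rot u 0 = u.
Proof. unfold rot. rewrite cos_0, sin_0. vec_ring. Qed.

Lemma rot_add u a b : rot u (a + b) = rot (rot u a) b.
Proof. unfold rot. rewrite cos_plus, sin_plus. vec_ring. Qed.

Lemma rot_addPI u t : rot u (t + PI) = vscale (-1) (rot u t).
Proof. unfold rot. rewrite cos_plus, sin_plus, cos_PI, sin_PI. vec_ring. Qed.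

Lemma rot_neq0 u t : u <> (0, 0) -> rot u t <> (0, 0).
Proof.
  intros Hu E. apply Hu. apply pair_equal_spec in E as [E1 E2].
  pose proof (sin2_cos2 t) as Hsc. unfold Rsqr in Hsc.
  destruct u as [u1 u2]; simpl in *. f_equal; nra.
Qed.

Lemma curve_continuous_rot u : curve_continuous (rot u).
Proof.
  intros t; unfold rot; simpl; split;
  repeat first [apply continuity_pt_minus | apply continuity_pt_plus | apply continuity_pt_mult
     | apply continuity_cos | apply continuity_sin
     | (apply continuity_pt_const; intros ? ?; reflexivity)].
Qed.

(* Cross and dot product of [w] with [rot w d] are [sin d |w|^2] and [cos d |w|^2]. *)
Lemma rot_pos_multiple w d k : w <> (0, 0) -> 0 < k -> rot w d = vscale k w ->
  sin d = 0 /\ 0 < cos d.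
Proof.
  intros Hw Hk E. apply pair_equal_spec in E as [E1 E2].
  destruct w as [w1 w2]; simpl in *.
  assert (Hpos : 0 < w1 * w1 + w2 * w2).
  { destruct (Req_dec w1 0), (Req_dec w2 0); subst; try nra. now contradiction Hw. }
  assert (Hsin : sin d * (w1 * w1 + w2 * w2) = 0).
  { replace (sin d * _) with (w1 * (sin d * w1 + cos d * w2) - w2 * (cos d * w1 - sin d * w2))
      by ring. rewrite E1, E2. ring. }
  assert (Hcos : cos d * (w1 * w1 + w2 * w2) = k * (w1 * w1 + w2 * w2)).
  { replace (cos d * _) with (w1 * (cos d * w1 - sin d * w2) + w2 * (sin d * w1 + cos d * w2))
      by ring. rewrite E1, E2. ring. }
  split; nra.
Qed.

Lemma cos_le0_of_sin_eq0 d : 0 < d < 2 * PI -> sin d = 0 -> cos d <= 0.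
Proof.
  intros Hd Hs. destruct (sin_eq_0_0 d Hs) as [k ->].
  pose proof PI_RGT_0.
  assert (Hk : (0 < k < 2)%Z) by (split; [apply lt_0_IZR | apply lt_IZR]; nra).
  replace k with 1%Z by lia. rewrite Rmult_1_l, cos_PI. lra.
Qed.

Section AdditiveMaps.

Variable L : pt -> pt.
Hypothesis L_add : forall y z, L (vadd y z) = vadd (L y) (L z).

Lemma additive0 : L (0, 0) = (0, 0).
Proof.
  pose proof (L_add (0, 0) (0, 0)) as E.
  replace (vadd (0, 0) (0, 0)) with ((0, 0) : pt) in E by vec_ring. vec_lra.
Qed.

Lemma additive_nat_scale n z : L (vscale (INR n) z) = vscale (INR n) (L z).
Proof.
  induction n as [| n IH].
  - simpl. replace (vscale 0 z) with ((0, 0) : pt) by vec_ring. rewrite additive0. vec_ring.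
  - rewrite S_INR. replace (vscale (INR n + 1) z) with (vadd (vscale (INR n) z) z) by vec_ring.
    rewrite L_add, IH. vec_ring.
Qed.

Lemma additive_int_scale m z : L (vscale (IZR m) z) = vscale (IZR m) (L z).
Proof.
  destruct (IZR_nat_cases m) as [n [-> | ->]]; [apply additive_nat_scale |].
  pose proof (L_add (vscale (INR n) z) (vscale (- INR n) z)) as E.
  replace (vadd (vscale (INR n) z) (vscale (- INR n) z)) with ((0, 0) : pt) in E by vec_ring.
  rewrite additive0, additive_nat_scale in E. vec_lra.
Qed.

Lemma additive_homogeneous_lin_app :
  (forall t z, L (vscale t z) = vscale t (L z)) ->
  forall x, L x = lin_app (fst (L (1, 0))) (fst (L (0, 1))) (snd (L (1, 0))) (snd (L (0, 1))) x.
Proof.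
  intros L_scale x.
  replace x with (vadd (vscale (fst x) (1, 0)) (vscale (snd x) (0, 1))) at 1 by vec_ring.
  rewrite L_add, !L_scale. vec_ring.
Qed.

End AdditiveMaps.

Section NormedPlane.

Variable N : pt -> R.
Hypothesis HN : is_norm N.

Lemma norm_ge0 v : 0 <= N v.
Proof. exact (proj1 HN v). Qed.

Lemma norm_eq0 v : N v = 0 -> v = (0, 0).
Proof. exact (proj1 (proj2 HN) v). Qed.

Lemma normZ c v : N (vscale c v) = Rabs c * N v.
Proof. exact (proj1 (proj2 (proj2 HN)) c v). Qed.

Lemma normD_le u v : N (vadd u v) <= N u + N v.
Proof. exact (proj2 (proj2 (proj2 HN)) u v). Qed.

Lemma normZ_nonneg c v : 0 <= c -> N (vscale c v) = c * N v.
Proof. intros Hc. rewrite normZ, Rabs_pos_eq by exact Hc. reflexivity. Qed.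

Lemma norm0 : N (0, 0) = 0.
Proof. norm_as N (vscale 0 (0, 0)). rewrite normZ_nonneg by lra. ring. Qed.

Lemma normN v : N (vscale (-1) v) = N v.
Proof. rewrite normZ, Rabs_left by lra. ring. Qed.

Lemma dist_self a : N (vsub a a) = 0.
Proof. norm_as N (0, 0). exact norm0. Qed.

Lemma dist_sym a b : N (vsub a b) = N (vsub b a).
Proof. rewrite <- (normN (vsub b a)). f_equal. vec_ring. Qed.

Lemma dist_triangle a b c : N (vsub a c) <= N (vsub a b) + N (vsub b c).
Proof. norm_as N (vadd (vsub a b) (vsub b c)). apply normD_le. Qed.

Lemma dist_eq0 a b : N (vsub a b) = 0 -> a = b.
Proof.
  intros E. apply norm_eq0, pair_equal_spec in E as [E1 E2].
  destruct a, b; simpl in *. f_equal; lra.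
Qed.

Lemma norm_sub_ge a b : N a - N b <= N (vsub a b).
Proof. pose proof (normD_le (vsub a b) b). norm_as N (vadd (vsub a b) b). lra. Qed.

Lemma unit_neq0 u : N u = 1 -> u <> (0, 0).
Proof. intros Hu ->. rewrite norm0 in Hu. lra. Qed.

Lemma norm_le_coords a : N a <= Rabs (fst a) * N (1, 0) + Rabs (snd a) * N (0, 1).
Proof.
  rewrite <- !normZ. norm_as N (vadd (vscale (fst a) (1, 0)) (vscale (snd a) (0, 1))).
  apply normD_le.
Qed.

Lemma norm_eq0_of_bounded_multiples v B : (forall n : nat, INR n * N v <= B) -> v = (0, 0).
Proof.
  intros Hbd. apply norm_eq0, Rle_antisym; [| apply norm_ge0].
  exact (nonpos_of_bounded_multiples _ _ Hbd).
Qed.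

Lemma norm_le_split z k : N z <= 2 * INR (S k) ->
  exists d, N d <= 2 /\ N (vsub z d) <= 2 * INR k.
Proof.
  rewrite S_INR. intros Hz. pose proof (pos_INR k) as Hk.
  assert (Hinv : 0 < / (INR k + 1)) by (apply Rinv_0_lt_compat; lra).
  exists (vscale (/ (INR k + 1)) z). split.
  - rewrite normZ_nonneg by lra.
    apply (Rmult_le_reg_l (INR k + 1)); [lra |].
    rewrite <- Rmult_assoc, Rinv_r by lra. lra.
  - replace (vsub z _) with (vscale (INR k / (INR k + 1)) z) by (vec_field; lra).
    rewrite normZ_nonneg by (apply Rmult_le_pos; lra).
    apply (Rmult_le_reg_l (INR k + 1)); [lra |].
    replace ((INR k + 1) * (INR k / (INR k + 1) * N z)) with (INR k * N z) by (field; lra).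
    nra.
Qed.

Lemma continuity_norm_curve F : curve_continuous F -> continuity (fun s => N (F s)).
Proof.
  intros CF t. destruct (CF t) as [C1 C2]. rewrite continuity_pt_eps in *.
  intros eps Heps.
  pose proof (norm_ge0 (1, 0)). pose proof (norm_ge0 (0, 1)).
  set (K := N (1, 0) + N (0, 1) + 1).
  assert (Heps' : eps / K > 0) by (apply Rdiv_lt_0_compat; unfold K; lra).
  destruct (C1 _ Heps') as [d1 [Hd1 H1]]. destruct (C2 _ Heps') as [d2 [Hd2 H2]].
  exists (Rmin d1 d2). split; [now apply Rmin_pos |].
  intros s Hs. pose proof (Rmin_l d1 d2). pose proof (Rmin_r d1 d2).
  specialize (H1 s ltac:(lra)). specialize (H2 s ltac:(lra)).
  pose proof (norm_le_coords (vsub (F s) (F t))) as Hco. simpl in Hco.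
  pose proof (norm_sub_ge (F s) (F t)) as Hge. pose proof (norm_sub_ge (F t) (F s)) as Hle.
  rewrite dist_sym in Hle.
  assert (eps / K * N (1, 0) + eps / K * N (0, 1) + eps / K = eps) by (unfold K; field; lra).
  apply Rabs_def1; nra.
Qed.

Lemma curve_hits_unit_norm F a b : curve_continuous F ->
  (N (F a) - 1) * (N (F b) - 1) <= 0 -> a <= b -> {t | a <= t <= b /\ N (F t) = 1}.
Proof.
  intros CF Hsign Hab.
  destruct (IVT_cor (fun s => N (F s) - 1) a b) as [t [Ht Et]]; auto.
  - intros s. apply continuity_pt_minus; [now apply continuity_norm_curve |].
    apply continuity_pt_const. intros ? ?; reflexivity.
  - exists t. split; [exact Ht | lra].
Qed.

(* [s |-> L (s z) - s L z] is additive, vanishes on integers and is bounded on [0, 1). *)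
Lemma additive_bounded_homogeneous (L : pt -> pt) t z :
  (forall y z, L (vadd y z) = vadd (L y) (L z)) ->
  (exists B, forall s, 0 <= s < 1 -> N (L (vscale s z)) <= B) ->
  L (vscale t z) = vscale t (L z).
Proof.
  intros L_add [B HB].
  set (D := fun s => vsub (L (vscale s z)) (vscale s (L z))).
  assert (D_add : forall a b, D (a + b) = vadd (D a) (D b)).
  { intros a b. unfold D. replace (vscale (a + b) z) with (vadd (vscale a z) (vscale b z))
      by vec_ring. rewrite L_add. vec_ring. }
  assert (D_nat : forall n : nat, D (INR n * t) = vscale (INR n) (D t)).
  { intros n. unfold D. replace (vscale (INR n * t) z) with (vscale (INR n) (vscale t z))
      by vec_ring. rewrite (additive_nat_scale L L_add). vec_ring. }
  assert (D_bd : forall s, 0 <= s < 1 -> N (D s) <= B + N (L z)).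
  { intros s Hs. unfold D. pose proof (normD_le (L (vscale s z)) (vscale (- s) (L z))) as Htri.
    rewrite normZ, Rabs_left1 in Htri by lra. pose proof (norm_ge0 (L z)).
    replace (vadd _ _) with (vsub (L (vscale s z)) (vscale s (L z))) in Htri by vec_ring.
    specialize (HB s Hs). nra. }
  enough (D t = (0, 0)) as E by (unfold D in E; vec_lra).
  apply (norm_eq0_of_bounded_multiples _ (B + N (L z))). intros n.
  rewrite <- normZ_nonneg, <- D_nat by apply pos_INR.
  pose proof (base_Int_part (INR n * t)) as [Hlo Hhi].
  set (m := Int_part (INR n * t)) in Hlo, Hhi.
  replace (INR n * t) with (IZR m + (INR n * t - IZR m)) by ring.
  rewrite D_add. unfold D at 1. rewrite (additive_int_scale L L_add).
  replace (vadd _ _) with (D (INR n * t - IZR m)) by (unfold D; vec_ring).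
  apply D_bd. lra.
Qed.

Definition unit_path (u : pt) (t : R) : pt := vscale (/ N (rot u t)) (rot u t).

Section UnitPath.

Variable u : pt.
Hypothesis Hu : u <> (0, 0).

Lemma norm_rot_pos t : 0 < N (rot u t).
Proof.
  destruct (Rle_lt_or_eq_dec _ _ (norm_ge0 (rot u t))) as [Hlt | Heq]; [exact Hlt |].
  exfalso. exact (rot_neq0 u t Hu (norm_eq0 _ (eq_sym Heq))).
Qed.

Lemma norm_unit_path t : N (unit_path u t) = 1.
Proof.
  pose proof (norm_rot_pos t). unfold unit_path.
  rewrite normZ_nonneg by (left; apply Rinv_0_lt_compat; lra). field. lra.
Qed.

Lemma unit_path0 : N u = 1 -> unit_path u 0 = u.
Proof. intros Hn. unfold unit_path. rewrite rot0, Hn. vec_field. Qed.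

Lemma unit_path_addPI t : unit_path u (t + PI) = vscale (-1) (unit_path u t).
Proof.
  pose proof (norm_rot_pos t). unfold unit_path. rewrite rot_addPI, normN.
  vec_field; lra.
Qed.

Lemma unit_path_add2PI t : unit_path u (t + 2 * PI) = unit_path u t.
Proof.
  replace (t + 2 * PI) with (t + PI + PI) by ring. rewrite !unit_path_addPI. vec_ring.
Qed.

Lemma unit_path_inj t1 t2 : 0 < t2 - t1 < 2 * PI -> unit_path u t1 <> unit_path u t2.
Proof.
  intros Ht E. set (w := rot u t1). set (d := t2 - t1).
  assert (Hrot : rot u t2 = rot w d) by (unfold w, d; rewrite <- rot_add; f_equal; ring).
  pose proof (norm_rot_pos t1) as P1. pose proof (norm_rot_pos t2) as P2.
  unfold unit_path in E. fold w in E, P1. rewrite Hrot in E, P2.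
  assert (Hmul : rot w d = vscale (N (rot w d) / N w) w).
  { transitivity (vscale (N (rot w d)) (vscale (/ N (rot w d)) (rot w d))); [vec_field; lra |].
    rewrite <- E. vec_field; lra. }
  assert (Hk : 0 < N (rot w d) / N w) by (apply Rdiv_lt_0_compat; lra).
  destruct (rot_pos_multiple w d _ (rot_neq0 u t1 Hu) Hk Hmul) as [Hs Hc].
  pose proof (cos_le0_of_sin_eq0 d Ht Hs). lra.
Qed.

Lemma curve_continuous_unit_path : curve_continuous (unit_path u).
Proof.
  intros t. pose proof (continuity_norm_curve _ (curve_continuous_rot u) t) as CN.
  destruct (curve_continuous_rot u t) as [C1 C2]. pose proof (norm_rot_pos t).
  unfold unit_path, vscale; simpl; split; apply continuity_pt_mult; auto;
  apply (continuity_pt_inv (fun s => N (rot u s))); auto; lra.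
Qed.

End UnitPath.

Lemma norm_le2_sum_units z : N z <= 2 -> exists e, N e = 1 /\ N (vsub z e) = 1.
Proof.
  intros Hz. pose proof PI_RGT_0.
  destruct (Rle_lt_or_eq_dec _ _ (norm_ge0 z)) as [Hpos | Hzero].
  - assert (Hz0 : z <> (0, 0)) by (intros ->; rewrite norm0 in Hpos; lra).
    set (F := fun t => vsub z (unit_path z t)).
    assert (CF : curve_continuous F).
    { apply curve_continuous_sub; [apply curve_continuous_const |].
      exact (curve_continuous_unit_path z Hz0). }
    assert (F0 : N (F 0) = Rabs (N z - 1)).
    { unfold F, unit_path. rewrite rot0.
      replace (vsub z _) with (vscale (1 - / N z) z) by vec_ring.
      replace (N z - 1) with ((1 - / N z) * N z) by (field; lra).
      rewrite normZ, Rabs_mult, (Rabs_pos_eq (N z)) by lra. reflexivity. }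
    assert (FPI : N (F PI) = N z + 1).
    { unfold F. rewrite <- (Rplus_0_l PI), unit_path_addPI by exact Hz0. unfold unit_path.
      rewrite rot0. replace (vsub z _) with (vscale (1 + / N z) z) by vec_ring.
      rewrite normZ_nonneg by (pose proof (Rinv_0_lt_compat _ Hpos); lra). field. lra. }
    assert (Hsign : (N (F 0) - 1) * (N (F PI) - 1) <= 0).
    { rewrite F0, FPI. assert (Rabs (N z - 1) <= 1) by (apply Rabs_le; lra). nra. }
    destruct (curve_hits_unit_norm F 0 PI CF Hsign ltac:(lra)) as [t [_ Ht]].
    exists (unit_path z t). split; [apply norm_unit_path, Hz0 | exact Ht].
  - assert (He : (1, 0) <> (0, 0) :> pt) by (intro E; injection E; lra).
    rewrite (norm_eq0 z (eq_sym Hzero)). exists (unit_path (1, 0) 0).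
    split; [| rewrite dist_sym; norm_as N (unit_path (1, 0) 0)]; apply norm_unit_path, He.
Qed.

Hypothesis HU : URTC N.

Definition apex a b x := N (vsub a x) = 1 /\ N (vsub b x) = 1.

Lemma apex_reflect a b x : apex a b x -> apex a b (vsub (vadd a b) x).
Proof.
  intros [Ha Hb]. split.
  - rewrite <- Hb, dist_sym. f_equal. vec_ring.
  - rewrite <- Ha, dist_sym. f_equal. vec_ring.
Qed.

Lemma apex_cases a b x z : N (vsub a b) = 1 -> apex a b x -> apex a b z ->
  z = x \/ z = vsub (vadd a b) x.
Proof.
  intros Hab Hx Hz.
  assert (Hne : x <> vsub (vadd a b) x).
  { intros E. destruct Hx as [Hax _].
    assert (vsub a b = vscale 2 (vsub a x)) as Hdouble by vec_lra.
    rewrite Hdouble, normZ_nonneg, Hax in Hab by lra. lra. }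
  destruct (HU a b Hab) as [x1 [x2 [_ Hs]]].
  pose proof (proj1 (Hs _) (apex_reflect _ _ _ Hx)) as Hr.
  apply Hs in Hx, Hz.
  destruct Hx as [-> | ->], Hz as [-> | ->], Hr as [Hr | Hr];
    first [now left | right; congruence | exfalso; congruence].
Qed.

Lemma dist0l u : N (vsub (0, 0) u) = N u.
Proof. rewrite dist_sym. f_equal. vec_ring. Qed.

Lemma apex_origin u v : N v = 1 -> N (vsub u v) = 1 -> apex (0, 0) u v.
Proof. intros Hv Huv. split; [rewrite dist0l |]; assumption. Qed.

Lemma unit_triangle_exists u : N u = 1 -> exists v, N v = 1 /\ N (vsub u v) = 1.
Proof.
  intros Hu. assert (H0u : N (vsub (0, 0) u) = 1) by (rewrite dist0l; exact Hu).
  destruct (HU _ _ H0u) as [x1 [x2 [_ Hs]]].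
  destruct (proj2 (Hs x1) (or_introl eq_refl)) as [H0 H1].
  exists x1. split; [rewrite <- H0, dist0l |]; easy.
Qed.

Lemma unit_triangle_sum_not_unit u v : N u = 1 -> N v = 1 -> N (vsub u v) = 1 ->
  N (vadd u v) <> 1.
Proof.
  intros Hu Hv Huv Hsum.
  assert (H0u : N (vsub (0, 0) u) = 1) by (rewrite dist0l; exact Hu).
  assert (Hapex : apex (0, 0) u (vadd u v)).
  { split.
    - rewrite dist_sym. norm_as N (vadd u v). exact Hsum.
    - norm_as N (vscale (-1) v). rewrite normN. exact Hv. }
  destruct (apex_cases _ _ _ _ H0u (apex_origin u v Hv Huv) Hapex) as [E | E].
  - apply (unit_neq0 u Hu). vec_lra.
  - apply (unit_neq0 v Hv). vec_lra.
Qed.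

Section ApexAngle.

Variable u : pt.
Hypothesis Hu : u <> (0, 0).

Local Notation p := (unit_path u).

Lemma dist_path_addPI a : N (vsub (p a) (p (a + PI))) = 2.
Proof.
  rewrite unit_path_addPI by exact Hu. norm_as N (vscale 2 (p a)).
  rewrite normZ_nonneg, norm_unit_path by (exact Hu || lra). ring.
Qed.

Lemma curve_continuous_path_diff a :
  curve_continuous (fun t => vsub (p a) (p t)) /\ curve_continuous (fun t => vsub (p t) (p a)).
Proof.
  pose proof (curve_continuous_unit_path u Hu).
  split; apply curve_continuous_sub; auto using curve_continuous_const.
Qed.

Lemma apex_of_path a t : N (vsub (p a) (p t)) = 1 -> apex (0, 0) (p a) (p t).
Proof. intros Hat. apply apex_origin; [apply norm_unit_path, Hu | exact Hat]. Qed.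

Lemma apex_angle_exists a : {t | a < t < a + PI /\ N (vsub (p a) (p t)) = 1}.
Proof.
  pose proof PI_RGT_0.
  assert (Hsign : (N (vsub (p a) (p a)) - 1) * (N (vsub (p a) (p (a + PI))) - 1) <= 0)
    by (rewrite dist_self, dist_path_addPI; lra).
  destruct (curve_hits_unit_norm _ _ _ (proj1 (curve_continuous_path_diff a)) Hsign ltac:(lra))
    as [t [Ht Et]].
  exists t. split; [| exact Et].
  assert (t <> a) by (intros ->; rewrite dist_self in Et; lra).
  assert (t <> a + PI) by (intros ->; rewrite dist_path_addPI in Et; lra).
  lra.
Qed.

(* A third apex angle in (a + PI, a + 2 PI) always exists; two in (a, a + PI) would give
   three distinct apexes of the unit segment [0, p a]. *)
Lemma apex_angle_unique a t1 t2 : a < t1 < a + PI -> a < t2 < a + PI ->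
  N (vsub (p a) (p t1)) = 1 -> N (vsub (p a) (p t2)) = 1 -> t1 = t2.
Proof.
  pose proof PI_RGT_0.
  enough (Hlt : forall s1 s2, a < s1 < a + PI -> a < s2 < a + PI ->
    N (vsub (p a) (p s1)) = 1 -> N (vsub (p a) (p s2)) = 1 -> s1 < s2 -> False).
  { intros I1 I2 E1 E2. destruct (Rtotal_order t1 t2) as [L | [L | L]]; auto.
    - exfalso; exact (Hlt t1 t2 I1 I2 E1 E2 L).
    - exfalso; exact (Hlt t2 t1 I2 I1 E2 E1 L). }
  intros s1 s2 I1 I2 E1 E2 Lt.
  assert (Hsign : (N (vsub (p a) (p (a + PI))) - 1) * (N (vsub (p a) (p (a + 2 * PI))) - 1) <= 0)
    by (rewrite dist_path_addPI, unit_path_add2PI, dist_self by exact Hu; lra).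
  destruct (curve_hits_unit_norm _ _ _ (proj1 (curve_continuous_path_diff a)) Hsign ltac:(lra))
    as [s3 [I3 E3]].
  assert (s3 <> a + PI) by (intros ->; rewrite dist_path_addPI in E3; lra).
  assert (s3 <> a + 2 * PI)
    by (intros ->; rewrite unit_path_add2PI, dist_self in E3 by exact Hu; lra).
  assert (H0a : N (vsub (0, 0) (p a)) = 1) by (rewrite dist0l; apply norm_unit_path, Hu).
  destruct (apex_cases _ _ _ _ H0a (apex_of_path a s1 E1) (apex_of_path a s2 E2)) as [F2 | F2],
    (apex_cases _ _ _ _ H0a (apex_of_path a s1 E1) (apex_of_path a s3 E3)) as [F3 | F3].
  - exact (unit_path_inj u Hu s1 s2 ltac:(lra) (eq_sym F2)).
  - exact (unit_path_inj u Hu s1 s2 ltac:(lra) (eq_sym F2)).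
  - exact (unit_path_inj u Hu s1 s3 ltac:(lra) (eq_sym F3)).
  - rewrite <- F3 in F2. exact (unit_path_inj u Hu s2 s3 ltac:(lra) F2).
Qed.

Lemma dist_path_lt1 a z t : a < z < a + PI -> N (vsub (p a) (p z)) = 1 ->
  a <= t < z -> N (vsub (p a) (p t)) < 1.
Proof.
  intros Iz Ez It. destruct (Rlt_le_dec (N (vsub (p a) (p t))) 1) as [L | L]; [exact L |].
  exfalso.
  assert (Hsign : (N (vsub (p a) (p a)) - 1) * (N (vsub (p a) (p t)) - 1) <= 0)
    by (rewrite dist_self; lra).
  destruct (curve_hits_unit_norm _ _ _ (proj1 (curve_continuous_path_diff a)) Hsign (proj1 It))
    as [w [Iw Ew]].
  assert (w <> a) by (intros ->; rewrite dist_self in Ew; lra).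
  assert (w = z) by (apply (apex_angle_unique a); auto; lra).
  lra.
Qed.

Lemma dist_path_gt1 a z t : a < z < a + PI -> N (vsub (p a) (p z)) = 1 ->
  z < t <= a + PI -> 1 < N (vsub (p a) (p t)).
Proof.
  intros Iz Ez It. destruct (Rlt_le_dec 1 (N (vsub (p a) (p t)))) as [L | L]; [exact L |].
  exfalso.
  assert (Hsign : (N (vsub (p a) (p t)) - 1) * (N (vsub (p a) (p (a + PI))) - 1) <= 0)
    by (rewrite dist_path_addPI; lra).
  destruct (curve_hits_unit_norm _ _ _ (proj1 (curve_continuous_path_diff a)) Hsign (proj2 It))
    as [w [Iw Ew]].
  assert (w <> a + PI) by (intros ->; rewrite dist_path_addPI in Ew; lra).
  assert (w = z) by (apply (apex_angle_unique a); auto; lra).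
  lra.
Qed.

Lemma apex_angle_stable a0 z e : 0 < e -> a0 + 2 * e <= z <= a0 + PI - 2 * e ->
  N (vsub (p a0) (p z)) = 1 ->
  exists d, 0 < d /\ forall a t, Rabs (a - a0) < d -> a < t < a + PI ->
    N (vsub (p a) (p t)) = 1 -> Rabs (t - z) <= e.
Proof.
  intros He Hz Ez. pose proof PI_RGT_0.
  assert (Gm : N (vsub (p a0) (p (z - e))) < 1) by (apply (dist_path_lt1 a0 z); auto; lra).
  assert (Gp : 1 < N (vsub (p a0) (p (z + e)))) by (apply (dist_path_gt1 a0 z); auto; lra).
  destruct (proj1 (continuity_pt_eps _ a0) (continuity_norm_curve _
    (proj2 (curve_continuous_path_diff (z - e))) a0) (1 - N (vsub (p a0) (p (z - e)))))
    as [d1 [Hd1 K1]]; [lra |].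
  destruct (proj1 (continuity_pt_eps _ a0) (continuity_norm_curve _
    (proj2 (curve_continuous_path_diff (z + e))) a0) (N (vsub (p a0) (p (z + e))) - 1))
    as [d2 [Hd2 K2]]; [lra |].
  exists (Rmin e (Rmin d1 d2)). split; [repeat apply Rmin_pos; lra |].
  intros a t Ha It Et.
  pose proof (Rmin_l e (Rmin d1 d2)). pose proof (Rmin_r e (Rmin d1 d2)).
  pose proof (Rmin_l d1 d2). pose proof (Rmin_r d1 d2).
  specialize (K1 a ltac:(lra)). specialize (K2 a ltac:(lra)).
  apply Rabs_def2 in K1, K2. assert (Hae : Rabs (a - a0) < e) by lra. apply Rabs_def2 in Hae.
  assert (Hm : N (vsub (p a) (p (z - e))) < 1) by lra.
  assert (Hp : 1 < N (vsub (p a) (p (z + e)))) by lra.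
  assert (Hsign : (N (vsub (p a) (p (z - e))) - 1) * (N (vsub (p a) (p (z + e))) - 1) <= 0)
    by nra.
  destruct (curve_hits_unit_norm _ _ _ (proj1 (curve_continuous_path_diff a)) Hsign ltac:(lra))
    as [w [Iw Ew]].
  assert (w = t) by (apply (apex_angle_unique a); auto; lra).
  apply Rabs_le. lra.
Qed.

Lemma apex_angle_continuous : exists f : R -> R,
  (forall a, a < f a < a + PI /\ N (vsub (p a) (p (f a))) = 1) /\ continuity f.
Proof.
  set (f := fun a => proj1_sig (apex_angle_exists a)).
  assert (Hf : forall a, a < f a < a + PI /\ N (vsub (p a) (p (f a))) = 1)
    by (intro a; exact (proj2_sig (apex_angle_exists a))).
  exists f. split; [exact Hf |].
  intro a0. apply continuity_pt_eps. intros eps Heps.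
  destruct (Hf a0) as [I0 E0].
  set (e := Rmin (eps / 2) (Rmin ((f a0 - a0) / 2) ((a0 + PI - f a0) / 2))).
  assert (e > 0) by (unfold e; repeat apply Rmin_pos; lra).
  assert (e <= eps / 2) by apply Rmin_l.
  assert (e <= (f a0 - a0) / 2) by (unfold e; eapply Rle_trans; [apply Rmin_r | apply Rmin_l]).
  assert (e <= (a0 + PI - f a0) / 2) by (unfold e; eapply Rle_trans; apply Rmin_r).
  destruct (apex_angle_stable a0 (f a0) e) as [d [Hd Hnear]]; auto; [lra |].
  exists d. split; [exact Hd |]. intros a Ha.
  pose proof (Hnear a (f a) Ha (proj1 (Hf a)) (proj2 (Hf a))). lra.
Qed.

End ApexAngle.

Lemma antipodal_curve_unit_dist S c : curve_continuous S -> S 0 = c ->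
  S PI = vscale (-1) c -> 1 <= N c -> exists a, N (vsub (S a) c) = 1.
Proof.
  intros CS S0 SPI Hc. pose proof PI_RGT_0.
  assert (CF : curve_continuous (fun a => vsub (S a) c))
    by (apply curve_continuous_sub; auto using curve_continuous_const).
  assert (Hsign : (N (vsub (S 0) c) - 1) * (N (vsub (S PI) c) - 1) <= 0).
  { rewrite S0, SPI, dist_self. norm_as N (vscale (-2) c). rewrite normZ, Rabs_left by lra. nra. }
  destruct (curve_hits_unit_norm _ _ _ CF Hsign ltac:(lra)) as [a [_ Ha]].
  exists a. exact Ha.
Qed.

(* Turning the rhombus spanned by a unit triangle through half a turn moves its long diagonal
   continuously from [u + v] to [-(u + v)]. *)
Lemma rhombus_at_unit_distance u v : N u = 1 -> N v = 1 -> N (vsub u v) = 1 ->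
  exists e e', N e = 1 /\ N e' = 1 /\ N (vsub e e') = 1 /\
    N (vsub (vadd e e') (vadd u v)) = 1.
Proof.
  intros Hu Hv Huv. pose proof PI_RGT_0. pose proof (unit_neq0 u Hu) as Hu0.
  destruct (apex_angle_continuous u Hu0) as [f [Hf Cf]].
  set (p := unit_path u).
  assert (Np : forall t, N (p t) = 1) by (intro; apply norm_unit_path, Hu0).
  assert (Cp : curve_continuous p) by apply curve_continuous_unit_path, Hu0.
  assert (Cpf : curve_continuous (fun a => p (f a))) by (apply curve_continuous_comp; auto).
  assert (Hpi : forall t, p (t + PI) = vscale (-1) (p t)) by (intro; apply unit_path_addPI, Hu0).
  assert (P0 : p 0 = u) by apply unit_path0, Hu.
  assert (PPI : p PI = vscale (-1) u) by (rewrite <- (Rplus_0_l PI), Hpi, P0; reflexivity).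
  assert (FPI : p (f PI) = vscale (-1) (p (f 0))).
  { replace (f PI) with (f 0 + PI); [apply Hpi |].
    destruct (Hf 0) as [I0 E0].
    apply (apex_angle_unique u Hu0 PI); [lra | apply Hf | | apply Hf].
    rewrite <- E0, <- (Rplus_0_l PI) at 1. fold p. rewrite !Hpi, <- normN. f_equal. vec_ring. }
  assert (Hc : 1 <= N (vadd u v)).
  { pose proof (norm_sub_ge (vscale 2 u) (vsub u v)) as Hge.
    rewrite normZ_nonneg, Hu, Huv in Hge by lra.
    replace (vsub (vscale 2 u) (vsub u v)) with (vadd u v) in Hge by vec_ring. lra. }
  assert (H0u : N (vsub (0, 0) u) = 1) by (rewrite dist0l; exact Hu).
  assert (Hapex : apex (0, 0) u (p (f 0))).
  { apply apex_origin; [apply Np | rewrite <- P0; apply Hf]. }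
  destruct (apex_cases _ _ _ _ H0u (apex_origin u v Hv Huv) Hapex) as [E | E].
  - destruct (antipodal_curve_unit_dist (fun a => vadd (p a) (p (f a))) (vadd u v))
      as [a Ha]; auto using curve_continuous_add.
    + rewrite P0, E. reflexivity.
    + rewrite PPI, FPI, E. vec_ring.
    + exists (p a), (p (f a)). repeat split; auto. apply Hf.
  - destruct (antipodal_curve_unit_dist (fun a => vsub (vscale 2 (p a)) (p (f a))) (vadd u v))
      as [a Ha]; auto using curve_continuous_sub, curve_continuous_scale.
    + rewrite P0, E. vec_ring.
    + rewrite PPI, FPI, E. vec_ring.
    + exists (p a), (vsub (p a) (p (f a))). repeat split; auto.
      * apply Hf.
      * norm_as N (p (f a)). apply Np.
      * rewrite <- Ha. f_equal. vec_ring.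
Qed.

Section UnitDistancePreserving.

Variable phi : pt -> pt.
Hypothesis Hphi : forall x y, N (vsub x y) = 1 -> N (vsub (phi x) (phi y)) = 1.

Lemma image_unit_shift x e : N e = 1 -> N (vsub (phi (vadd x e)) (phi x)) = 1.
Proof. intros He. apply Hphi. norm_as N e. exact He. Qed.

Lemma rhombus_image x e e' : N e = 1 -> N e' = 1 -> N (vsub e e') = 1 ->
  phi (vadd x (vadd e e')) = phi x \/
  phi (vadd x (vadd e e')) = vsub (vadd (phi (vadd x e)) (phi (vadd x e'))) (phi x).
Proof.
  intros He He' Hee.
  assert (HAB : N (vsub (phi (vadd x e)) (phi (vadd x e'))) = 1)
    by (apply Hphi; norm_as N (vsub e e'); exact Hee).
  assert (HP : apex (phi (vadd x e)) (phi (vadd x e')) (phi x))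
    by (split; apply image_unit_shift; assumption).
  assert (HZ : apex (phi (vadd x e)) (phi (vadd x e')) (phi (vadd x (vadd e e')))).
  { split; apply Hphi.
    - norm_as N (vscale (-1) e'). rewrite normN. exact He'.
    - norm_as N (vscale (-1) e). rewrite normN. exact He. }
  exact (apex_cases _ _ _ _ HAB HP HZ).
Qed.

(* If [phi] identified [x] with [x + (u + v)], a rhombus whose long diagonal lies at distance 1
   from [u + v] would map to a unit triangle with a unit long diagonal. *)
Lemma rhombus_image_not_collapsed x u v : N u = 1 -> N v = 1 -> N (vsub u v) = 1 ->
  phi (vadd x (vadd u v)) <> phi x.
Proof.
  intros Hu Hv Huv Ecol.
  destruct (rhombus_at_unit_distance u v Hu Hv Huv) as [e [e' [He [He' [Hee Hd]]]]].
  assert (Hfar : N (vsub (phi (vadd x (vadd e e'))) (phi x)) = 1).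
  { rewrite <- Ecol. apply Hphi. norm_as N (vsub (vadd e e') (vadd u v)). exact Hd. }
  destruct (rhombus_image x e e' He He' Hee) as [E | E]; rewrite E in Hfar.
  - rewrite dist_self in Hfar. lra.
  - apply (unit_triangle_sum_not_unit (vsub (phi (vadd x e)) (phi x))
      (vsub (phi (vadd x e')) (phi x))); try (apply image_unit_shift; assumption).
    + norm_as N (vsub (phi (vadd x e)) (phi (vadd x e'))).
      apply Hphi. norm_as N (vsub e e'). exact Hee.
    + norm_as N (vsub (vsub (vadd (phi (vadd x e)) (phi (vadd x e'))) (phi x)) (phi x)).
      exact Hfar.
Qed.

Lemma parallelogram_rule q u v : N u = 1 -> N v = 1 -> N (vsub u v) = 1 ->
  phi (vadd q (vadd u v)) = vsub (vadd (phi (vadd q u)) (phi (vadd q v))) (phi q).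
Proof.
  intros Hu Hv Huv.
  destruct (rhombus_image q u v Hu Hv Huv) as [E | E]; [| exact E].
  exfalso. exact (rhombus_image_not_collapsed q u v Hu Hv Huv E).
Qed.

Definition increment (w q : pt) := vsub (phi (vadd q w)) (phi q).

(* By the parallelogram rule, translating by either apex [v] or [w - v] of a unit triangle
   on [w] preserves the increment along [w], and [w] is their sum. *)
Lemma increment_shift w q : N w = 1 -> increment w (vadd q w) = increment w q.
Proof.
  intros Hw. destruct (unit_triangle_exists w Hw) as [v [Hv Hwv]].
  assert (Hstep : forall q' v', N v' = 1 -> N (vsub w v') = 1 ->
      increment w (vadd q' v') = increment w q').
  { intros q' v' Hv' Hwv'. unfold increment.
    replace (vadd (vadd q' v') w) with (vadd q' (vadd w v')) by vec_ring.
    rewrite (parallelogram_rule q' w v') by assumption. vec_ring. }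
  replace (vadd q w) with (vadd (vadd q v) (vsub w v)) by vec_ring.
  rewrite Hstep by (try norm_as N v; assumption).
  apply Hstep; assumption.
Qed.

Lemma increment_shift_nat w q (n : nat) : N w = 1 ->
  increment w (vadd q (vscale (INR n) w)) = increment w q.
Proof.
  intros Hw. induction n as [| n IH].
  - f_equal. vec_ring.
  - rewrite S_INR, <- IH, <- (increment_shift w (vadd q (vscale (INR n) w))) by exact Hw.
    f_equal. vec_ring.
Qed.

Lemma phi_along_line w q (n : nat) : N w = 1 ->
  phi (vadd q (vscale (INR n) w)) = vadd (phi q) (vscale (INR n) (increment w q)).
Proof.
  intros Hw. induction n as [| n IH].
  - replace (vadd q (vscale (INR 0) w)) with q by vec_ring. vec_ring.
  - rewrite S_INR.
    transitivity (vadd (phi (vadd q (vscale (INR n) w))) (increment w (vadd q (vscale (INR n) w)))).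
    + unfold increment. replace (vadd (vadd q (vscale (INR n) w)) w)
        with (vadd q (vscale (INR n + 1) w)) by vec_ring. vec_ring.
    + rewrite increment_shift_nat, IH by exact Hw. vec_ring.
Qed.

Lemma image_dist_le2 a b : N (vsub a b) <= 2 -> N (vsub (phi a) (phi b)) <= 2.
Proof.
  intros Hab. destruct (norm_le2_sum_units _ Hab) as [e [He Hd]].
  pose proof (dist_triangle (phi a) (phi (vadd b e)) (phi b)) as Htri.
  assert (N (vsub (phi a) (phi (vadd b e))) = 1)
    by (apply Hphi; norm_as N (vsub (vsub a b) e); exact Hd).
  rewrite image_unit_shift in Htri by exact He. lra.
Qed.

Lemma image_dist_le a b (k : nat) : N (vsub a b) <= 2 * INR k ->
  N (vsub (phi a) (phi b)) <= 2 * INR k.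
Proof.
  revert a b. induction k as [| k IH]; intros a b Hab.
  - simpl in *. rewrite (dist_eq0 a b) by (pose proof (norm_ge0 (vsub a b)); lra).
    rewrite dist_self. lra.
  - destruct (norm_le_split _ _ Hab) as [d [Hd Hzd]].
    pose proof (dist_triangle (phi a) (phi (vadd b d)) (phi b)).
    assert (N (vsub (phi a) (phi (vadd b d))) <= 2 * INR k)
      by (apply IH; norm_as N (vsub (vsub a b) d); exact Hzd).
    assert (N (vsub (phi (vadd b d)) (phi b)) <= 2)
      by (apply image_dist_le2; norm_as N d; exact Hd).
    rewrite S_INR. lra.
Qed.

(* Along the line [q' + n w] the increments would make [phi] drift linearly away from
   [phi (q + n w)], whereas [image_dist_le] keeps the two points at bounded distance. *)
Lemma increment_const w q q' : N w = 1 -> increment w q' = increment w q.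
Proof.
  intros Hw. destruct (nat_above (N (vsub q' q) / 2)) as [K HK].
  set (D := vsub (increment w q') (increment w q)).
  enough (D = (0, 0)) as E by (unfold D in E; vec_lra).
  apply (norm_eq0_of_bounded_multiples _ (2 * INR K + N (vsub (phi q') (phi q)))). intros n.
  assert (Hfar : N (vsub (phi (vadd q' (vscale (INR n) w))) (phi (vadd q (vscale (INR n) w))))
      <= 2 * INR K) by (apply image_dist_le; norm_as N (vsub q' q); lra).
  rewrite !phi_along_line in Hfar by exact Hw.
  rewrite <- normZ_nonneg by apply pos_INR.
  pose proof (normD_le (vsub (vadd (phi q') (vscale (INR n) (increment w q')))
      (vadd (phi q) (vscale (INR n) (increment w q)))) (vsub (phi q) (phi q'))) as Htri.
  rewrite (dist_sym (phi q)) in Htri.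
  replace (vadd _ _) with (vscale (INR n) D) in Htri by (unfold D; vec_ring). lra.
Qed.

Definition linear_part (z : pt) := vsub (phi z) (phi (0, 0)).

Lemma linear_part_add_unit y w : N w = 1 ->
  linear_part (vadd y w) = vadd (linear_part y) (linear_part w).
Proof.
  intros Hw. pose proof (increment_const w (0, 0) y Hw) as E. unfold increment in E.
  replace (vadd (0, 0) w) with w in E by vec_ring. unfold linear_part. vec_lra.
Qed.

Lemma linear_part_add_le2 y z : N z <= 2 ->
  linear_part (vadd y z) = vadd (linear_part y) (linear_part z).
Proof.
  intros Hz. destruct (norm_le2_sum_units z Hz) as [e [He Hze]].
  replace (vadd y z) with (vadd (vadd y e) (vsub z e)) by vec_ring.
  replace (linear_part z) with (linear_part (vadd e (vsub z e))) by (f_equal; vec_ring).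
  rewrite !linear_part_add_unit by assumption. vec_ring.
Qed.

Lemma linear_part_add y z : linear_part (vadd y z) = vadd (linear_part y) (linear_part z).
Proof.
  destruct (nat_above (N z / 2)) as [k Hk].
  assert (Hz : N z <= 2 * INR k) by lra. clear Hk. revert y z Hz.
  induction k as [| k IH]; intros y z Hz.
  - simpl in Hz. rewrite (norm_eq0 z) by (pose proof (norm_ge0 z); lra).
    unfold linear_part. replace (vadd y (0, 0)) with y by vec_ring. vec_ring.
  - destruct (norm_le_split _ _ Hz) as [d [Hd Hzd]].
    replace (vadd y z) with (vadd (vadd y d) (vsub z d)) by vec_ring.
    replace (linear_part z) with (linear_part (vadd d (vsub z d))) by (f_equal; vec_ring).
    rewrite (IH _ _ Hzd), (IH _ _ Hzd), (linear_part_add_le2 y d Hd). vec_ring.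
Qed.

Lemma linear_part_scale t z : linear_part (vscale t z) = vscale t (linear_part z).
Proof.
  apply additive_bounded_homogeneous; [exact linear_part_add |].
  destruct (nat_above (N z / 2)) as [K HK]. exists (2 * INR K). intros s Hs.
  apply image_dist_le. norm_as N (vscale s z).
  rewrite normZ_nonneg by lra. pose proof (norm_ge0 z). nra.
Qed.

Lemma linear_part_dist x y : vsub (phi x) (phi y) = linear_part (vsub x y).
Proof.
  pose proof (linear_part_add y (vsub x y)) as E.
  replace (vadd y (vsub x y)) with x in E by vec_ring. unfold linear_part in *. vec_lra.
Qed.

Lemma image_dist x y : N (vsub (phi x) (phi y)) = N (vsub x y).
Proof.
  rewrite linear_part_dist. generalize (vsub x y) as z. intros z.
  destruct (Req_dec (N z) 0) as [Hz | Hz].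
  - rewrite (norm_eq0 z Hz), norm0. apply dist_self.
  - pose proof (norm_ge0 z).
    set (w := vscale (/ N z) z).
    assert (Hw : N w = 1).
    { unfold w. rewrite normZ_nonneg; [field | apply Rlt_le, Rinv_0_lt_compat]; lra. }
    replace z with (vscale (N z) w) at 1 by (unfold w; vec_field; exact Hz).
    rewrite linear_part_scale, normZ_nonneg by lra.
    unfold linear_part. rewrite Hphi; [ring |]. norm_as N w. exact Hw.
Qed.

End UnitDistancePreserving.

End NormedPlane.

Theorem theorem1 (N : pt -> R) (phi : pt -> pt) :
  is_norm N -> URTC N ->
  (forall x y : pt, N (vsub x y) = 1 -> N (vsub (phi x) (phi y)) = 1) ->
  affine_isometry N phi.
Proof.
  intros HN HU Hphi.
  set (L := linear_part phi).
  pose proof (linear_part_add N HN HU phi Hphi) as L_add.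
  pose proof (linear_part_scale N HN HU phi Hphi) as L_scale.
  split.
  - exists (fst (L (1, 0))), (fst (L (0, 1))), (snd (L (1, 0))), (snd (L (0, 1))), (phi (0, 0)).
    intros x. rewrite <- (additive_homogeneous_lin_app L L_add L_scale).
    unfold L, linear_part. vec_ring.
  - exact (image_dist N HN HU phi Hphi).
Qed.
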